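(* Let $Y\subseteq\omega$ and let $X\subseteq\omega$ be $\Delta^0_2(Y)$. Then there is a sequence of structures $(\mathcal C_i)_{i\in\omega}$, uniformly computable in $Y$, such that for every $i\in\omega$, $\mathcal C_i\cong\mathcal S_0$ if $i\in X$ and $\mathcal C_i\cong\mathcal S_1$ if $i\notin X$.
   Context: Let $\mathcal S=(2^\omega,(F_\nu)_{\nu\in 2^{<\omega}},(R_\nu)_{\nu\in2^{<\omega}})$ where $F_\nu(\sigma)(x)=\sigma(x)+\nu(x)\bmod 2$ (with $\nu(x)=0$ for $x\ge|\nu|$) and $R_\nu(\sigma)$ holds iff $\nu$ is an initial segment of $\sigma$. Let $\hat{\mathcal S}_0$, $\hat{\mathcal S}_1$ be the substructures of $\mathcal S$ generated by the constant sequence $\bar0$, resp. $\bar1$, and let $\mathcal S_0,\mathcal S_1$ be their relational versions obtained by replacing each unary function $F_\nu$ by its graph, a binary relation $graph_{F_\nu}$. Structures have universe $\omega$. *)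

From Stdlib Require Import Arith List.
Import ListNotations.

Fixpoint tri (n : nat) : nat := match n with 0 => 0 | S k => S k + tri k end.
Definition pair (x y : nat) : nat := tri (x + y) + y.
(* unpair enumerates N x N in the same (Cantor) order as pair *)
Definition unpair_step (p : nat * nat) : nat * nat :=
  match p with (0, y) => (S y, 0) | (S x, y) => (x, S y) end.
Fixpoint unpair (n : nat) : nat * nat :=
  match n with 0 => (0, 0) | S k => unpair_step (unpair k) end.

Inductive code : Type :=
| cZero | cSucc | cId | cOracle | cFst | cSnd
| cPair (f g : code)
| cComp (f g : code)
| cPrec (f g : code)      (* h <x,0> = f x ; h <x,n+1> = g <x,<n,h<x,n>>> *)
| cMu (f : code).

Inductive eval (Y : nat -> bool) : code -> nat -> nat -> Prop :=
| ev_zero x : eval Y cZero x 0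
| ev_succ x : eval Y cSucc x (S x)
| ev_id x : eval Y cId x x
| ev_oracle x : eval Y cOracle x (if Y x then 1 else 0)
| ev_fst x : eval Y cFst x (fst (unpair x))
| ev_snd x : eval Y cSnd x (snd (unpair x))
| ev_pair f g x a b : eval Y f x a -> eval Y g x b -> eval Y (cPair f g) x (pair a b)
| ev_comp f g x y z : eval Y g x y -> eval Y f y z -> eval Y (cComp f g) x z
| ev_prec0 f g x a : eval Y f x a -> eval Y (cPrec f g) (pair x 0) a
| ev_precS f g x n a b : eval Y (cPrec f g) (pair x n) a ->
    eval Y g (pair x (pair n a)) b -> eval Y (cPrec f g) (pair x (S n)) b
| ev_mu f x n : eval Y f (pair x n) 0 ->
    (forall m, m < n -> exists k, eval Y f (pair x m) (S k)) ->
    eval Y (cMu f) x n.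

Definition fun_computable (Y : nat -> bool) (f : nat -> nat) : Prop :=
  exists c : code, forall x, eval Y c x (f x).

Definition rel_computable (Y : nat -> bool) (P : nat -> Prop) : Prop :=
  exists chi : nat -> bool, (forall x, P x <-> chi x = true) /\
    fun_computable Y (fun x => if chi x then 1 else 0).

Definition Sigma02 (Y X : nat -> bool) : Prop :=
  exists R : nat -> Prop, rel_computable Y R /\
    forall n, X n = true <-> exists a, forall b, R (pair n (pair a b)).
Definition Pi02 (Y X : nat -> bool) : Prop :=
  exists R : nat -> Prop, rel_computable Y R /\
    forall n, X n = true <-> forall a, exists b, R (pair n (pair a b)).
Definition Delta02 (Y X : nat -> bool) : Prop := Sigma02 Y X /\ Pi02 Y X.

(* nu : 2^{<omega} is a list bool; nu(x) = 0 (false) for x >= |nu| *)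
Definition F (nu : list bool) (sigma : nat -> bool) : nat -> bool :=
  fun x => xorb (sigma x) (nth x nu false).
Definition Rnu (nu : list bool) (sigma : nat -> bool) : Prop :=
  forall x, x < length nu -> sigma x = nth x nu false.

(* the universe of the substructure of S generated by the constant sequence b̄ *)
Inductive gen (b : bool) : (nat -> bool) -> Prop :=
| gen_base : gen b (fun _ => b)
| gen_step nu sigma : gen b sigma -> gen b (F nu sigma).

(* relational structures with universe omega in the language
   { graph_{F_nu} (binary), R_nu (unary) : nu in 2^{<omega} } *)
Record rstruct : Type := {
  rG : list bool -> nat -> nat -> Prop;
  rR : list bool -> nat -> Prop
}.

(* A ≅ S_b  (relational version of the substructure generated by b̄);
   elements of 2^omega are compared pointwise *)
Definition iso_S (A : rstruct) (b : bool) : Prop :=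
  exists h : nat -> (nat -> bool),
    (forall x, gen b (h x)) /\
    (forall x y, (forall n, h x n = h y n) -> x = y) /\
    (forall sigma, gen b sigma -> exists x, forall n, h x n = sigma n) /\
    (forall nu x y, rG A nu x y <-> (forall n, h y n = F nu (h x) n)) /\
    (forall nu x, rR A nu x <-> Rnu nu (h x)).

(* coding of 2^{<omega} into omega (a bijection) *)
Fixpoint code_bl (l : list bool) : nat :=
  match l with
  | [] => 0
  | b :: l' => S (pair (if b then 1 else 0) (code_bl l'))
  end.

(* a sequence of structures uniformly computable in Y: their atomic diagrams
   are uniformly Y-computable *)
Definition unif_computable (Y : nat -> bool) (C : nat -> rstruct) : Prop :=
  (exists PG : nat -> Prop, rel_computable Y PG /\
     forall i nu x y, rG (C i) nu x y <-> PG (pair i (pair (code_bl nu) (pair x y)))) /\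
  (exists PR : nat -> Prop, rel_computable Y PR /\
     forall i nu x, rR (C i) nu x <-> PR (pair i (pair (code_bl nu) x))).

From Stdlib Require Import Arith List Lia Bool Classical FunctionalExtensionality.
Import ListNotations.

(* Since X is Delta^0_2(Y), the limit lemma yields a Y-computable g with lim_s g(i,s) = X(i).
   Then sigma_i(n) := not g(i,n) is eventually constant with value not X(i), and the
   substructure of S generated by that constant sequence consists exactly of the finite
   modifications of sigma_i.  So C_i has as universe the binary codes x of finite sets, x
   standing for sigma_i xor x: F_nu acts on codes as bitwise xor with nu, independently of i,
   and R_nu compares nu with an initial segment of sigma_i xor x; both are decidable in Y,
   uniformly in i. *)

Arguments pair : simpl never.

Lemma tri_ge k : k <= tri k.
Proof. induction k; simpl; lia. Qed.

Lemma pair_ge x y : x + y <= pair x y.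
Proof. unfold pair. pose proof (tri_ge (x + y)). lia. Qed.

Lemma pair_S_r x y : pair x (S y) = S (pair (S x) y).
Proof. unfold pair. replace (x + S y) with (S x + y) by lia. lia. Qed.

Lemma pair_S_0 y : pair (S y) 0 = S (pair 0 y).
Proof. unfold pair. rewrite !Nat.add_0_r. simpl. lia. Qed.

Lemma unpair_pair x y : unpair (pair x y) = (x, y).
Proof.
  remember (x + y) as d eqn:Hd. revert x y Hd.
  induction d as [|d IHd]; intros x y Hd.
  - assert (x = 0) by lia; assert (y = 0) by lia; subst. reflexivity.
  - revert x Hd. induction y as [|y IHy]; intros x Hd.
    + replace x with (S d) by lia. rewrite pair_S_0. cbn [unpair].
      rewrite (IHd 0 d) by lia. reflexivity.
    + rewrite pair_S_r. cbn [unpair]. rewrite (IHy (S x)) by lia. reflexivity.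
Qed.

Definition unpair1 (n : nat) : nat := fst (unpair n).
Definition unpair2 (n : nat) : nat := snd (unpair n).

Lemma unpair1_pair x y : unpair1 (pair x y) = x.
Proof. unfold unpair1. rewrite unpair_pair. reflexivity. Qed.

Lemma unpair2_pair x y : unpair2 (pair x y) = y.
Proof. unfold unpair2. rewrite unpair_pair. reflexivity. Qed.

Lemma pair_unpair n : pair (unpair1 n) (unpair2 n) = n.
Proof.
  unfold unpair1, unpair2. induction n as [|n IHn]; [reflexivity|].
  cbn [unpair]. destruct (unpair n) as [[|x] y]; simpl in *.
  - rewrite pair_S_0. congruence.
  - rewrite pair_S_r. congruence.
Qed.

#[local] Hint Rewrite unpair1_pair unpair2_pair : unpair.
Arguments unpair1 : simpl never.
Arguments unpair2 : simpl never.

Section Computability.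
Variable Y : nat -> bool.

Lemma computable_ext (f g : nat -> nat) :
  fun_computable Y f -> (forall x, f x = g x) -> fun_computable Y g.
Proof. intros [c Hc] E. exists c. intros x. rewrite <- E. apply Hc. Qed.

Lemma computable_id : fun_computable Y (fun x => x).
Proof. exists cId. intros x. constructor. Qed.

Lemma computable_comp (f g : nat -> nat) :
  fun_computable Y f -> fun_computable Y g -> fun_computable Y (fun x => f (g x)).
Proof. intros [cf Hf] [cg Hg]. exists (cComp cf cg). intros x. econstructor; eauto. Qed.

Lemma computable_succ (a : nat -> nat) :
  fun_computable Y a -> fun_computable Y (fun x => S (a x)).
Proof. intros [c Hc]. exists (cComp cSucc c). intros x. econstructor; [apply Hc | constructor]. Qed.

Lemma computable_const k : fun_computable Y (fun _ => k).
Proof.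
  induction k as [|k IHk]; [exists cZero; intros x; constructor|].
  exact (computable_succ _ IHk).
Qed.

Lemma computable_pair (f g : nat -> nat) :
  fun_computable Y f -> fun_computable Y g -> fun_computable Y (fun x => pair (f x) (g x)).
Proof. intros [cf Hf] [cg Hg]. exists (cPair cf cg). intros x. constructor; auto. Qed.

Lemma computable_unpair1 (a : nat -> nat) :
  fun_computable Y a -> fun_computable Y (fun x => unpair1 (a x)).
Proof. intros [c Hc]. exists (cComp cFst c). intros x. econstructor; [apply Hc | apply ev_fst]. Qed.

Lemma computable_unpair2 (a : nat -> nat) :
  fun_computable Y a -> fun_computable Y (fun x => unpair2 (a x)).
Proof. intros [c Hc]. exists (cComp cSnd c). intros x. econstructor; [apply Hc | apply ev_snd]. Qed.

Fixpoint prim_rec (f g : nat -> nat) (x n : nat) : nat :=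
  match n with
  | 0 => f x
  | S n => g (pair x (pair n (prim_rec f g x n)))
  end.

Lemma computable_prim_rec (f g a n : nat -> nat) :
  fun_computable Y f -> fun_computable Y g -> fun_computable Y a -> fun_computable Y n ->
  fun_computable Y (fun x => prim_rec f g (a x) (n x)).
Proof.
  intros [cf Hf] [cg Hg] Ha Hn.
  assert (Hrec : forall x k, eval Y (cPrec cf cg) (pair x k) (prim_rec f g x k)).
  { intros x k. induction k; simpl.
    - apply ev_prec0, Hf.
    - eapply ev_precS; [exact IHk | apply Hg]. }
  assert (Hprec : fun_computable Y (fun p => prim_rec f g (unpair1 p) (unpair2 p))).
  { exists (cPrec cf cg). intros p. rewrite <- (pair_unpair p) at 1. apply Hrec. }
  eapply computable_ext; [exact (computable_comp _ _ Hprec (computable_pair _ _ Ha Hn))|].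
  intros x. cbv beta. autorewrite with unpair. reflexivity.
Qed.

Lemma computable_iter (f a n : nat -> nat) :
  fun_computable Y f -> fun_computable Y a -> fun_computable Y n ->
  fun_computable Y (fun x => Nat.iter (n x) f (a x)).
Proof.
  intros Hf Ha Hn.
  eapply computable_ext.
  - apply (computable_prim_rec (fun z => z) (fun q => f (unpair2 (unpair2 q))));
      [exact computable_id | | exact Ha | exact Hn].
    exact (computable_comp _ _ Hf (computable_unpair2 _ (computable_unpair2 _ computable_id))).
  - intros x. cbv beta. induction (n x) as [|k IHk]; [reflexivity|].
    cbn [prim_rec Nat.iter]. autorewrite with unpair. rewrite IHk. reflexivity.
Qed.

Definition bool_computable (P : nat -> bool) : Prop :=
  fun_computable Y (fun x => Nat.b2n (P x)).

Lemma bool_computable_ext (P Q : nat -> bool) :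
  bool_computable P -> (forall x, P x = Q x) -> bool_computable Q.
Proof.
  intros HP E. eapply computable_ext; [exact HP|]. intros x. cbv beta. rewrite E. reflexivity.
Qed.

Lemma bool_computable_comp (P : nat -> bool) (a : nat -> nat) :
  bool_computable P -> fun_computable Y a -> bool_computable (fun x => P (a x)).
Proof. apply computable_comp. Qed.

Lemma bool_computable_comp2 (Q : nat -> nat -> bool) (a b : nat -> nat) :
  bool_computable (fun p => Q (unpair1 p) (unpair2 p)) ->
  fun_computable Y a -> fun_computable Y b ->
  bool_computable (fun x => Q (a x) (b x)).
Proof.
  intros HQ Ha Hb. eapply bool_computable_ext.
  - exact (bool_computable_comp _ _ HQ (computable_pair _ _ Ha Hb)).
  - intros x. cbv beta. autorewrite with unpair. reflexivity.
Qed.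

Lemma computable_if (b : nat -> bool) (u v : nat -> nat) :
  bool_computable b -> fun_computable Y u -> fun_computable Y v ->
  fun_computable Y (fun x => if b x then u x else v x).
Proof.
  intros Hb Hu Hv. eapply computable_ext.
  - apply (computable_prim_rec v (fun q => u (unpair1 q)) (fun x => x) (fun x => Nat.b2n (b x)));
      [exact Hv | exact (computable_comp _ _ Hu (computable_unpair1 _ computable_id))
      | exact computable_id | exact Hb].
  - intros x. cbv beta. destruct (b x); cbn; autorewrite with unpair; reflexivity.
Qed.

Lemma bool_computable_op1 (op : bool -> bool) (P : nat -> bool) :
  bool_computable P -> bool_computable (fun x => op (P x)).
Proof.
  intros HP. eapply computable_ext.
  - exact (computable_if P _ _ HP (computable_const (Nat.b2n (op true)))
                                  (computable_const (Nat.b2n (op false)))).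
  - intros x. cbv beta. destruct (P x); reflexivity.
Qed.

Lemma bool_computable_op2 (op : bool -> bool -> bool) (P Q : nat -> bool) :
  bool_computable P -> bool_computable Q -> bool_computable (fun x => op (P x) (Q x)).
Proof.
  intros HP HQ. eapply computable_ext.
  - exact (computable_if P _ _ HP (bool_computable_op1 (op true) Q HQ)
                                  (bool_computable_op1 (op false) Q HQ)).
  - intros x. cbv beta. destruct (P x); reflexivity.
Qed.

Lemma bool_computable_eqb_0 (a : nat -> nat) :
  fun_computable Y a -> bool_computable (fun x => a x =? 0).
Proof.
  intros Ha. eapply computable_ext.
  - exact (computable_prim_rec (fun _ => 1) (fun _ => 0) (fun _ => 0) a
             (computable_const 1) (computable_const 0) (computable_const 0) Ha).
  - intros x. cbv beta. destruct (a x); reflexivity.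
Qed.

Lemma bool_computable_forallb (Q : nat -> nat -> bool) (s : nat -> nat) :
  bool_computable (fun p => Q (unpair1 p) (unpair2 p)) -> fun_computable Y s ->
  bool_computable (fun x => forallb (Q x) (seq 0 (s x))).
Proof.
  intros HQ Hs.
  assert (Hstep : bool_computable (fun q =>
    negb (unpair2 (unpair2 q) =? 0) && Q (unpair1 q) (unpair1 (unpair2 q)))).
  { apply bool_computable_op2.
    - apply bool_computable_op1, bool_computable_eqb_0.
      exact (computable_unpair2 _ (computable_unpair2 _ computable_id)).
    - apply (bool_computable_comp2 _ _ _ HQ).
      + exact (computable_unpair1 _ computable_id).
      + exact (computable_unpair1 _ (computable_unpair2 _ computable_id)). }
  eapply computable_ext.
  - exact (computable_prim_rec _ _ (fun x => x) s (computable_const 1) Hstep computable_id Hs).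
  - intros x. cbv beta. induction (s x) as [|k IHk]; [reflexivity|].
    cbn [prim_rec]. autorewrite with unpair. rewrite IHk, seq_S, forallb_app. simpl.
    destruct (forallb (Q x) (seq 0 k)), (Q x k); reflexivity.
Qed.

Lemma existsb_negb_forallb {A} (f : A -> bool) l :
  existsb f l = negb (forallb (fun a => negb (f a)) l).
Proof.
  induction l as [|a l IHl]; simpl; [reflexivity|]. rewrite IHl. destruct (f a); reflexivity.
Qed.

Lemma bool_computable_existsb (Q : nat -> nat -> bool) (s : nat -> nat) :
  bool_computable (fun p => Q (unpair1 p) (unpair2 p)) -> fun_computable Y s ->
  bool_computable (fun x => existsb (Q x) (seq 0 (s x))).
Proof.
  intros HQ Hs. eapply bool_computable_ext.
  - apply bool_computable_op1, (bool_computable_forallb (fun x a => negb (Q x a))); [|exact Hs].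
    exact (bool_computable_op1 _ _ HQ).
  - intros x. cbv beta. symmetry. apply existsb_negb_forallb.
Qed.

Definition div2_odd_step (q : nat) : nat :=
  if unpair2 (unpair2 (unpair2 q)) =? 0
  then pair (unpair1 (unpair2 (unpair2 q))) 1
  else pair (S (unpair1 (unpair2 (unpair2 q)))) 0.

Lemma div2_succ n : Nat.div2 (S n) = if Nat.odd n then S (Nat.div2 n) else Nat.div2 n.
Proof.
  pose proof (Nat.div2_odd n) as Hn. pose proof (Nat.div2_odd (S n)) as HSn.
  rewrite Nat.odd_succ, <- Nat.negb_odd in HSn.
  destruct (Nat.odd n); simpl in *; lia.
Qed.

Lemma prim_rec_div2_odd n :
  prim_rec (fun _ => 0) div2_odd_step 0 n = pair (Nat.div2 n) (Nat.b2n (Nat.odd n)).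
Proof.
  induction n as [|n IHn]; [reflexivity|].
  cbn [prim_rec]. rewrite IHn. unfold div2_odd_step. autorewrite with unpair.
  rewrite div2_succ, Nat.odd_succ, <- Nat.negb_odd. destruct (Nat.odd n); reflexivity.
Qed.

Lemma testbit_iter_div2 a n : Nat.testbit a n = Nat.odd (Nat.iter n Nat.div2 a).
Proof. revert a; induction n; intros a; [reflexivity|]. rewrite Nat.iter_succ_r. apply IHn. Qed.

Lemma computable_div2_odd : fun_computable Y (fun x => pair (Nat.div2 x) (Nat.b2n (Nat.odd x))).
Proof.
  assert (Hstep : fun_computable Y div2_odd_step).
  { pose proof (computable_unpair2 _ (computable_unpair2 _ computable_id)) as Hprev.
    apply computable_if.
    - exact (bool_computable_eqb_0 _ (computable_unpair2 _ Hprev)).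
    - exact (computable_pair _ _ (computable_unpair1 _ Hprev) (computable_const 1)).
    - exact (computable_pair _ _ (computable_succ _ (computable_unpair1 _ Hprev))
                                 (computable_const 0)). }
  eapply computable_ext.
  - exact (computable_prim_rec _ _ (fun _ => 0) (fun x => x)
             (computable_const 0) Hstep (computable_const 0) computable_id).
  - intros x. apply prim_rec_div2_odd.
Qed.

Lemma bool_computable_testbit (a n : nat -> nat) :
  fun_computable Y a -> fun_computable Y n -> bool_computable (fun x => Nat.testbit (a x) (n x)).
Proof.
  intros Ha Hn.
  assert (Hdiv2 : fun_computable Y Nat.div2).
  { eapply computable_ext; [exact (computable_unpair1 _ computable_div2_odd)|].
    intros x. cbv beta. autorewrite with unpair. reflexivity. }
  eapply computable_ext.
  - exact (computable_unpair2 _ (computable_comp _ _ computable_div2_odd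
                                   (computable_iter _ _ _ Hdiv2 Ha Hn))).
  - intros x. cbv beta. autorewrite with unpair. rewrite testbit_iter_div2. reflexivity.
Qed.

Definition code_tl (m : nat) : nat := unpair2 (pred m).
Definition code_hd (m : nat) : bool := negb (m =? 0) && negb (unpair1 (pred m) =? 0).
Definition code_nth (m n : nat) : bool := code_hd (Nat.iter n code_tl m).

Lemma computable_pred (a : nat -> nat) :
  fun_computable Y a -> fun_computable Y (fun x => pred (a x)).
Proof.
  intros Ha. eapply computable_ext.
  - exact (computable_prim_rec _ _ (fun _ => 0) a (computable_const 0)
             (computable_unpair1 _ (computable_unpair2 _ computable_id)) (computable_const 0) Ha).
  - intros x. cbv beta. destruct (a x); cbn [prim_rec]; autorewrite with unpair; reflexivity.
Qed.

Lemma computable_code_tl : fun_computable Y code_tl.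
Proof. exact (computable_unpair2 _ (computable_pred _ computable_id)). Qed.

Lemma bool_computable_code_hd (a : nat -> nat) :
  fun_computable Y a -> bool_computable (fun x => code_hd (a x)).
Proof.
  intros Ha. apply (bool_computable_op2 andb); apply (bool_computable_op1 negb);
    apply bool_computable_eqb_0; [exact Ha | exact (computable_unpair1 _ (computable_pred _ Ha))].
Qed.

Lemma bool_computable_code_nth (a n : nat -> nat) :
  fun_computable Y a -> fun_computable Y n -> bool_computable (fun x => code_nth (a x) (n x)).
Proof.
  intros Ha Hn. apply bool_computable_code_hd, computable_iter;
    [exact computable_code_tl | exact Ha | exact Hn].
Qed.

End Computability.

(* Dispatches on the head symbol syntactically: trying these lemmas by plain [apply] makes
   unification unfold the pairing functions and run away. *)
Ltac computability :=
  repeat (cbv beta; lazymatch goal with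
    | |- fun_computable _ (fun _ => ?k) => apply computable_const
    | |- fun_computable _ (fun x => x) => apply computable_id
    | |- fun_computable _ (fun x => S _) => apply computable_succ
    | |- fun_computable _ (fun x => pair _ _) => apply computable_pair
    | |- fun_computable _ (fun x => unpair1 _) => apply computable_unpair1
    | |- fun_computable _ (fun x => unpair2 _) => apply computable_unpair2
    | |- fun_computable _ (fun x => Nat.iter _ _ _) => apply computable_iter
    | |- fun_computable _ (fun x => if _ then _ else _) => apply computable_if
    | |- fun_computable _ unpair1 => apply (computable_unpair1 _ (fun x => x))
    | |- fun_computable _ unpair2 => apply (computable_unpair2 _ (fun x => x))
    | |- fun_computable _ code_tl => apply computable_code_tl
    | |- bool_computable _ (fun x => code_nth _ _) => apply bool_computable_code_nth
    | |- bool_computable _ (fun x => _ =? 0) => apply bool_computable_eqb_0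
    | |- bool_computable _ (fun x => Nat.testbit _ _) => apply bool_computable_testbit
    | |- bool_computable _ (fun x => forallb _ (seq 0 _)) => apply bool_computable_forallb
    | |- bool_computable _ (fun x => existsb _ (seq 0 _)) => apply bool_computable_existsb
    | |- bool_computable _ (fun x => negb _) => apply (bool_computable_op1 _ negb)
    | |- bool_computable _ (fun x => andb _ _) => apply (bool_computable_op2 _ andb)
    | |- bool_computable _ (fun x => orb _ _) => apply (bool_computable_op2 _ orb)
    | |- bool_computable _ (fun x => xorb _ _) => apply (bool_computable_op2 _ xorb)
    | |- bool_computable _ (fun x => Bool.eqb _ _) => apply (bool_computable_op2 _ Bool.eqb)
    | H : bool_computable _ (fun p => ?Q (unpair1 p) (unpair2 p))
      |- bool_computable _ (fun x => ?Q _ _) => apply (bool_computable_comp2 _ Q _ _ H)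
    | H : bool_computable _ ?P |- bool_computable _ (fun x => ?P _) =>
        apply (bool_computable_comp _ P _ H)
    | H : fun_computable _ ?f |- fun_computable _ ?f => exact H
    end).

Lemma iter_code_tl n nu : Nat.iter n code_tl (code_bl nu) = code_bl (skipn n nu).
Proof.
  revert nu; induction n as [|n IHn]; intros nu; [reflexivity|].
  rewrite Nat.iter_succ_r. destruct nu as [|b nu].
  - change (code_tl (code_bl [])) with (code_bl []). rewrite IHn. destruct n; reflexivity.
  - unfold code_tl at 2. cbn [code_bl pred]. autorewrite with unpair. apply IHn.
Qed.

Lemma code_hd_code_bl nu : code_hd (code_bl nu) = hd false nu.
Proof.
  destruct nu as [|b nu]; [reflexivity|].
  unfold code_hd. cbn [code_bl pred]. autorewrite with unpair. destruct b; reflexivity.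
Qed.

Lemma code_nth_code_bl nu n : code_nth (code_bl nu) n = nth n nu false.
Proof.
  unfold code_nth. rewrite iter_code_tl, code_hd_code_bl. revert nu.
  induction n; intros [|b nu]; simpl; auto.
Qed.

Lemma iter_code_tl_eqb_0 n nu : (Nat.iter n code_tl (code_bl nu) =? 0) = (length nu <=? n).
Proof.
  rewrite iter_code_tl. destruct (skipn n nu) eqn:E.
  - symmetry. apply Nat.leb_le. apply (f_equal (@length bool)) in E.
    rewrite length_skipn in E. simpl in E. lia.
  - symmetry. apply Nat.leb_gt. apply (f_equal (@length bool)) in E.
    rewrite length_skipn in E. simpl in E. lia.
Qed.

Lemma length_le_code_bl nu : length nu <= code_bl nu.
Proof.
  induction nu as [|b nu IHnu]; simpl; [lia|].
  pose proof (pair_ge (if b then 1 else 0) (code_bl nu)). lia.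
Qed.

Definition eventually_eq (σ : nat -> bool) (b : bool) : Prop :=
  exists N, forall n, N <= n -> σ n = b.

Lemma gen_eventually_eq b σ : gen b σ -> eventually_eq σ b.
Proof.
  induction 1 as [|nu σ _ [N HN]]; [exists 0; auto|].
  exists (Nat.max N (length nu)). intros n Hn. unfold F.
  rewrite HN, nth_overflow by lia. apply xorb_false_r.
Qed.

Lemma nth_map_seq (f : nat -> bool) N n : n < N -> nth n (map f (seq 0 N)) false = f n.
Proof.
  intros Hn. rewrite (nth_indep _ false (f 0)) by (rewrite length_map, length_seq; lia).
  rewrite map_nth, seq_nth by lia. reflexivity.
Qed.

Lemma eventually_eq_gen b σ : eventually_eq σ b -> gen b σ.
Proof.
  intros [N HN].
  replace σ with (F (map (fun n => xorb b (σ n)) (seq 0 N)) (fun _ => b)).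
  - apply gen_step, gen_base.
  - apply functional_extensionality. intros n. unfold F. destruct (Nat.lt_ge_cases n N).
    + rewrite nth_map_seq by assumption. destruct b, (σ n); reflexivity.
    + rewrite nth_overflow by (rewrite length_map, length_seq; lia).
      rewrite HN by assumption. destruct b; reflexivity.
Qed.

Lemma testbit_ge a n : a <= n -> Nat.testbit a n = false.
Proof.
  intros H. destruct a; [apply Nat.bits_0|]. apply Nat.bits_above_log2.
  pose proof (Nat.log2_lt_lin (S a)). lia.
Qed.

Lemma testbit_surj (d : nat -> bool) N :
  (forall n, N <= n -> d n = false) -> exists x, forall n, Nat.testbit x n = d n.
Proof.
  revert d. induction N as [|N IHN]; intros d Hd.
  - exists 0. intros n. rewrite Nat.bits_0, Hd; [reflexivity | lia].
  - destruct (IHN (fun n => d (S n))) as [x Hx]; [intros n Hn; apply Hd; lia|].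
    exists (2 * x + Nat.b2n (d 0)). intros [|n].
    + apply Nat.testbit_0_r.
    + rewrite Nat.testbit_succ_r. apply Hx.
Qed.

(* The element x stands for the sequence σ xor (binary digits of x). *)
Definition finite_variants (σ : nat -> bool) : rstruct := {|
  rG := fun nu x y => forall n, Nat.testbit y n = xorb (Nat.testbit x n) (nth n nu false);
  rR := fun nu x => forall n, n < length nu -> xorb (σ n) (Nat.testbit x n) = nth n nu false |}.

Lemma iso_S_finite_variants σ b : eventually_eq σ b -> iso_S (finite_variants σ) b.
Proof.
  intros [N HN]. exists (fun x n => xorb (σ n) (Nat.testbit x n)).
  split; [|split; [|split; [|split]]].
  - intros x. apply eventually_eq_gen. exists (N + x). intros n Hn.
    rewrite HN, testbit_ge by lia. apply xorb_false_r.
  - intros x y Hxy. apply Nat.bits_inj. intros n. specialize (Hxy n).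
    destruct (σ n), (Nat.testbit x n), (Nat.testbit y n); simpl in Hxy; congruence.
  - intros τ Hτ. destruct (gen_eventually_eq _ _ Hτ) as [M HM].
    destruct (testbit_surj (fun n => xorb (σ n) (τ n)) (N + M)) as [x Hx].
    { intros n Hn. rewrite HN, HM by lia. apply xorb_nilpotent. }
    exists x. intros n. rewrite Hx. destruct (σ n), (τ n); reflexivity.
  - intros nu x y. cbn [rG finite_variants]. unfold F.
    split; intros H n; specialize (H n);
      destruct (σ n), (Nat.testbit x n), (Nat.testbit y n), (nth n nu false);
      simpl in *; congruence.
  - intros nu x. reflexivity.
Qed.

(* For p = <i, <code nu, <x, y>>>; digits at positions n >= p need no check since x, y and
   |nu| are all <= p. *)
Definition graph_check (p : nat) : bool :=
  forallb (fun n => Bool.eqb (Nat.testbit (unpair2 (unpair2 (unpair2 p))) n)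
                             (xorb (Nat.testbit (unpair1 (unpair2 (unpair2 p))) n)
                                   (code_nth (unpair1 (unpair2 p)) n)))
          (seq 0 p).

(* For p = <i, <code nu, x>>; the test [Nat.iter n code_tl _ =? 0] means n >= |nu|. *)
Definition prefix_check (σ : nat -> nat -> bool) (p : nat) : bool :=
  forallb (fun n => (Nat.iter n code_tl (unpair1 (unpair2 p)) =? 0) ||
                    Bool.eqb (xorb (σ (unpair1 p) n) (Nat.testbit (unpair2 (unpair2 p)) n))
                             (code_nth (unpair1 (unpair2 p)) n))
          (seq 0 (unpair1 (unpair2 p))).

Lemma graph_check_spec σ i nu x y :
  graph_check (pair i (pair (code_bl nu) (pair x y))) = true <-> rG (finite_variants σ) nu x y.
Proof.
  cbn [rG finite_variants]. unfold graph_check. rewrite forallb_forall.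
  set (p := pair i (pair (code_bl nu) (pair x y))).
  assert (Hp : length nu + (x + y) <= p).
  { pose proof (pair_ge i (pair (code_bl nu) (pair x y))).
    pose proof (pair_ge (code_bl nu) (pair x y)). pose proof (pair_ge x y).
    pose proof (length_le_code_bl nu). subst p; lia. }
  subst p. autorewrite with unpair. split.
  - intros H n. destruct (Nat.lt_ge_cases n (pair i (pair (code_bl nu) (pair x y)))) as [Hn|Hn].
    + apply eqb_prop. rewrite <- code_nth_code_bl. apply H, in_seq. lia.
    + rewrite !testbit_ge, nth_overflow by lia. reflexivity.
  - intros H n _. rewrite code_nth_code_bl, H. apply eqb_reflx.
Qed.

Lemma prefix_check_spec σ i nu x :
  prefix_check σ (pair i (pair (code_bl nu) x)) = true <-> rR (finite_variants (σ i)) nu x.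
Proof.
  cbn [rR finite_variants]. unfold prefix_check. autorewrite with unpair.
  rewrite forallb_forall. pose proof (length_le_code_bl nu) as Hlen. split.
  - intros H n Hn. specialize (H n). rewrite in_seq in H. specialize (H ltac:(lia)).
    rewrite iter_code_tl_eqb_0, code_nth_code_bl in H.
    destruct (Nat.leb_spec (length nu) n); [lia|]. apply eqb_prop, H.
  - intros H n _. rewrite iter_code_tl_eqb_0, code_nth_code_bl.
    destruct (Nat.leb_spec (length nu) n); [reflexivity|].
    rewrite H by assumption. apply eqb_reflx.
Qed.

Lemma rel_computable_bool Y (P : nat -> bool) :
  bool_computable Y P -> rel_computable Y (fun p => P p = true).
Proof. intros HP. exists P. split; [reflexivity | exact HP]. Qed.

Lemma unif_computable_finite_variants Y (σ : nat -> nat -> bool) :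
  bool_computable Y (fun p => σ (unpair1 p) (unpair2 p)) ->
  unif_computable Y (fun i => finite_variants (σ i)).
Proof.
  intros Hσ. split.
  - exists (fun p => graph_check p = true). split.
    + apply rel_computable_bool. unfold graph_check. computability.
    + intros i nu x y. symmetry. apply graph_check_spec.
  - exists (fun p => prefix_check σ p = true). split.
    + apply rel_computable_bool. unfold prefix_check. computability.
    + intros i nu x. symmetry. apply prefix_check_spec.
Qed.

(* Guess X(i) = true at stage s iff some a < s passes the Sigma_2 test below s and every
   a' <= a passes the Pi_2 test below s.  If X(i) = false, a Pi_2 failure a2 blocks every
   a >= a2, and each a < a2 eventually fails the Sigma_2 test. *)
Definition limit_guess (c1 c2 : nat -> bool) (i s : nat) : bool :=
  existsb (fun a => forallb (fun b => c1 (pair i (pair a b))) (seq 0 s) &&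
                    forallb (fun a' => existsb (fun b => c2 (pair i (pair a' b))) (seq 0 s))
                            (seq 0 (S a)))
          (seq 0 s).

Lemma limit_guess_spec c1 c2 i s :
  limit_guess c1 c2 i s = true <->
  exists a, a < s /\ (forall b, b < s -> c1 (pair i (pair a b)) = true) /\
            (forall a', a' <= a -> exists b, b < s /\ c2 (pair i (pair a' b)) = true).
Proof.
  unfold limit_guess. rewrite existsb_exists.
  setoid_rewrite andb_true_iff. setoid_rewrite forallb_forall.
  setoid_rewrite existsb_exists. setoid_rewrite in_seq.
  split.
  - intros [a [Ha [H1 H2]]]. exists a. split; [lia|]. split.
    + intros b Hb. apply H1. lia.
    + intros a' Ha'. destruct (H2 a' ltac:(lia)) as [b [Hb Hc]]. exists b. split; [lia | exact Hc].
  - intros [a [Ha [H1 H2]]]. exists a. split; [lia|]. split.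
    + intros b Hb. apply H1. lia.
    + intros a' Ha'. destruct (H2 a' ltac:(lia)) as [b [Hb Hc]]. exists b. split; [lia | exact Hc].
Qed.

Lemma bounded_witnesses (Q : nat -> nat -> Prop) k :
  (forall a, a < k -> exists b, Q a b) -> exists B, forall a, a < k -> exists b, b < B /\ Q a b.
Proof.
  induction k as [|k IHk]; intros H; [exists 0; intros; lia|].
  destruct IHk as [B HB]; [intros a Ha; apply H; lia|].
  destruct (H k) as [b Hb]; [lia|].
  exists (Nat.max B (S b)). intros a Ha. destruct (Nat.eq_dec a k) as [->|Hne].
  - exists b. split; [lia | exact Hb].
  - destruct (HB a) as [b' [Hb' HQ]]; [lia|]. exists b'. split; [lia | exact HQ].
Qed.

Lemma limit_guess_true c1 c2 i :
  (exists a, forall b, c1 (pair i (pair a b)) = true) ->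
  (forall a, exists b, c2 (pair i (pair a b)) = true) ->
  eventually_eq (limit_guess c1 c2 i) true.
Proof.
  intros [a Ha] H2.
  destruct (bounded_witnesses (fun a' b => c2 (pair i (pair a' b)) = true) (S a)) as [B HB];
    [intros; apply H2|].
  exists (Nat.max (S a) B). intros s Hs. apply limit_guess_spec.
  exists a. split; [lia|]. split; [intros; apply Ha|].
  intros a' Ha'. destruct (HB a') as [b [Hb Hc]]; [lia|]. exists b. split; [lia | exact Hc].
Qed.

Lemma limit_guess_false c1 c2 i :
  (forall a, exists b, c1 (pair i (pair a b)) = false) ->
  (exists a, forall b, c2 (pair i (pair a b)) = false) ->
  eventually_eq (limit_guess c1 c2 i) false.
Proof.
  intros H1 [a2 Ha2].
  destruct (bounded_witnesses (fun a b => c1 (pair i (pair a b)) = false) a2) as [B HB];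
    [intros; apply H1|].
  exists B. intros s Hs. apply not_true_iff_false. rewrite limit_guess_spec.
  intros [a [Ha [Hc1 Hc2]]]. destruct (Nat.lt_ge_cases a a2) as [Hlt|Hge].
  - destruct (HB a Hlt) as [b [Hb Hf]]. rewrite Hc1 in Hf by lia. discriminate.
  - destruct (Hc2 a2 Hge) as [b [_ Ht]]. rewrite Ha2 in Ht. discriminate.
Qed.

Lemma Delta02_limit Y X :
  Delta02 Y X ->
  exists g : nat -> nat -> bool,
    bool_computable Y (fun p => g (unpair1 p) (unpair2 p)) /\ forall i, eventually_eq (g i) (X i).
Proof.
  intros [[R1 [[c1 [Hc1 Cc1]] HS]] [R2 [[c2 [Hc2 Cc2]] HP]]].
  change (bool_computable Y c1) in Cc1. change (bool_computable Y c2) in Cc2.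
  exists (limit_guess c1 c2). split; [unfold limit_guess; computability|].
  intros i. destruct (X i) eqn:EX.
  - apply limit_guess_true.
    + destruct (proj1 (HS i) EX) as [a Ha]. exists a. intros b. apply Hc1, Ha.
    + intros a. destruct (proj1 (HP i) EX a) as [b Hb]. exists b. apply Hc2, Hb.
  - rewrite <- not_true_iff_false in EX.
    assert (HnS : ~ exists a, forall b, c1 (pair i (pair a b)) = true).
    { intros [a Ha]. apply EX, HS. exists a. intros b. apply Hc1, Ha. }
    assert (HnP : ~ forall a, exists b, c2 (pair i (pair a b)) = true).
    { intros H. apply EX, HP. intros a. destruct (H a) as [b Hb]. exists b. apply Hc2, Hb. }
    apply limit_guess_false.
    + intros a. destruct (not_all_ex_not _ _ (not_ex_all_not _ _ HnS a)) as [b Hb].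
      exists b. apply not_true_iff_false, Hb.
    + destruct (not_all_ex_not _ _ HnP) as [a Ha]. exists a. intros b.
      apply not_true_iff_false. intros Hb. apply Ha. exists b. exact Hb.
Qed.

Theorem lemma4p7 (Y X : nat -> bool) :
  Delta02 Y X ->
  exists C : nat -> rstruct,
    unif_computable Y C /\
    forall i : nat,
      (X i = true -> iso_S (C i) false) /\
      (X i = false -> iso_S (C i) true).
Proof.
  intros HX. destruct (Delta02_limit Y X HX) as [g [Hg Hlim]].
  exists (fun i => finite_variants (fun n => negb (g i n))). split.
  - apply unif_computable_finite_variants. computability.
  - intros i.
    assert (Hiso : iso_S (finite_variants (fun n => negb (g i n))) (negb (X i))).
    { apply iso_S_finite_variants. destruct (Hlim i) as [N HN].
      exists N. intros n Hn. rewrite HN by exact Hn. reflexivity. }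
    split; intros E; rewrite E in Hiso; exact Hiso.
Qed.
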